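(* Let $n\geqslant2$, $m\geqslant1$, let $\tau$ be a cuspidal $\mathrm{R}$-representation of $\mathrm{GL}_n(k_\mathrm{F})$, and let $g=\mathrm{diag}(\varpi_\mathrm{F}^{\alpha_{n-1}},\dots,\varpi_\mathrm{F}^{\alpha_1},1)$ with integers $0\leqslant\alpha_1\leqslant\dots\leqslant\alpha_{n-1}$ and $\alpha_{n-1}\geqslant m$. Then $$\mathrm{Hom}_{\mathrm{R}[\overline{\mathrm{K}_n\cap g\mathrm{K}_n(m)g^{-1}}]}(1,\tau)=0.$$
   Context: $\mathrm{F}$ non-archimedean local field, ring of integers $\mathfrak{o}_\mathrm{F}$, maximal ideal $\mathfrak{p}_\mathrm{F}=\varpi_\mathrm{F}\mathfrak{o}_\mathrm{F}$, residue field $k_\mathrm{F}$ of characteristic $p$. $\mathrm{R}$ algebraically closed of characteristic $\ell\neq p$. $\mathrm{K}_n=\mathrm{GL}_n(\mathfrak{o}_\mathrm{F})$, $\mathrm{K}_n^1=1+\mathrm{M}_n(\mathfrak{p}_\mathrm{F})$; for a subgroup $H\subseteq\mathrm{K}_n$, $\overline H$ is its image in $\mathrm{K}_n/\mathrm{K}_n^1=\mathrm{GL}_n(k_\mathrm{F})$. For $m\geqslant1$, $\mathrm{K}_n(m)=\{\left(\begin{smallmatrix}a&b\\c&d\end{smallmatrix}\right)\in\mathrm{K}_n: c\in\mathrm{M}_{1\times(n-1)}(\mathfrak{p}_\mathrm{F}^m),\ d\in1+\mathfrak{p}_\mathrm{F}^m\}$ (blocks $(n-1)+1$). Cuspidal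 representation of $\mathrm{GL}_n(k_\mathrm{F})$: irreducible with no nonzero vectors fixed by the unipotent radical of any proper parabolic subgroup. *)

From HB Require Import structures.
From mathcomp Require Import all_boot all_order all_algebra all_fingroup.
From mathcomp Require Import mxrepresentation.
Set Implicit Arguments. Unset Strict Implicit. Unset Printing Implicit Defensive.
Import Order.TTheory GRing.Theory Num.Theory.
Local Open Scope ring_scope.

Section LocalField.
Variables (F : fieldType) (val : F -> int).

(* normalized discrete valuation (values on nonzero elements; val 0 unused) *)
Definition dval_axioms : Prop :=
  [/\ forall x y : F, x != 0 -> y != 0 -> val (x * y) = val x + val y,
      forall x y : F, x != 0 -> y != 0 -> x + y != 0 ->
        Num.min (val x) (val y) <= val (x + y)
    & exists w : F, w != 0 /\ val w = 1].

(* x lies in p_F^N, i.e. x = 0 or val x >= N  (N = 0 : ring of integers) *)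
Definition in_pow (N : int) (x : F) : bool := (x == 0) || (N <= val x).
Definition intg (x : F) : bool := in_pow 0 x.

Definition val_complete : Prop :=
  forall u : nat -> F,
    (forall N : int, exists M : nat, forall i j : nat,
        (M <= i)%N -> (M <= j)%N -> in_pow N (u i - u j)) ->
    exists l : F, forall N : int, exists M : nat, forall i : nat,
        (M <= i)%N -> in_pow N (u i - l).

(* red : o_F -> k_F is a surjective ring morphism with kernel p_F,
   i.e. k_F = o_F / p_F *)
Definition residue_map (k : finFieldType) (red : F -> k) : Prop :=
  [/\ red 1 = 1,
      {in intg &, forall x y, red (x + y) = red x + red y},
      {in intg &, forall x y, red (x * y) = red x * red y},
      (forall a : k, exists2 x, intg x & red x = a)
    & {in intg, forall x, (red x == 0) = in_pow 1 x}].

Definition nonarch_local_field (k : finFieldType) (red : F -> k) : Prop :=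
  [/\ dval_axioms, val_complete & residue_map red].

Variable n : nat.
Notation N := n.-1.+1.

Definition inK (x : 'M[F]_N) : Prop :=
  (forall i j, intg (x i j)) /\ \det x != 0 /\ val (\det x) = 0.

(* K_n(m): blocks (n-1)+1, last row c in p^m, corner d in 1 + p^m *)
Definition inKm (m : nat) (x : 'M[F]_N) : Prop :=
  [/\ inK x,
      forall j : 'I_N, j != ord_max -> in_pow m%:Z (x ord_max j)
    & in_pow m%:Z (x ord_max ord_max - 1)].

Definition gmat (w : F) (alpha : nat -> nat) : 'M[F]_N :=
  diag_mx (\row_(i < N) w ^+ (if (i < n.-1)%N then alpha (n.-1 - i)%N else 0%N)).

End LocalField.

(* Hom_{R[H]}(1, rG) = 0 : no nonzero vector fixed by all h with P h *)
Definition no_fixed_vectors (R : fieldType) (gT : finGroupType) (G : {group gT})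
  (d : nat) (rG : mx_representation R G d) (P : gT -> Prop) : Prop :=
  forall v : 'rV[R]_d, (forall h, P h -> v *m rG h = v) -> v = 0.

(* unipotent radical of the standard parabolic with block break points S
   (s in S means a block boundary between indices s-1 and s) *)
Definition std_unip (k : fieldType) (N : nat) (S : {set 'I_N}) (A : 'M[k]_N) : Prop :=
  forall i j : 'I_N,
    [/\ i = j -> A i j = 1,
        (j < i)%N -> A i j = 0
      & (i < j)%N -> ~~ [exists s in S, (i < s <= j)%N] -> A i j = 0].

(* cuspidal: irreducible, and no nonzero vector fixed by the unipotent radical
   h U_S h^-1 of any proper parabolic subgroup h P_S h^-1 *)
Definition cuspidal (k : finFieldType) (n : nat) (R : fieldType) (d : nat)
  (tau : mx_representation R [set: {'GL_n[k]}]%G d) : Prop :=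
  mx_irreducible tau /\
  forall (S : {set 'I_n.-1.+1}), S != set0 -> ord0 \notin S ->
  forall h : {'GL_n[k]},
    no_fixed_vectors tau (fun u => std_unip S (GLval (h^-1 * u * h)%g)).

(* The image of K_n ∩ g K_n(m) g^-1 in GL_n(k_F) contains the group of
   unipotent matrices 1 + (first column below the diagonal): lift such a
   matrix to x = 1 + (integral first column); then g^-1 x g only rescales the
   first column by nonnegative powers of ϖ, and its last-row entry picks up
   ϖ^(α_{n-1}) with α_{n-1} >= m.  That group is the conjugate, by the
   order-reversing permutation, of the unipotent radical of the standard
   parabolic of type (n-1, 1), so cuspidality of τ kills its fixed vectors. *)
From HB Require Import structures.
From mathcomp Require Import all_boot all_order all_algebra all_fingroup.
From mathcomp Require Import mxrepresentation.
Set Implicit Arguments. Unset Strict Implicit. Unset Printing Implicit Defensive.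
Import Order.TTheory GRing.Theory Num.Theory.
Local Open Scope ring_scope.

Section FirstColumnUnipotent.
Variable p : nat.

Definition first_col_unip (R : pzRingType) (c : 'I_p.+1 -> R) : 'M[R]_p.+1 :=
  \matrix_(i, j) (if i == j then 1 else if j == ord0 then c i else 0).

Lemma det_first_col_unip (R : comPzRingType) (c : 'I_p.+1 -> R) :
  \det (first_col_unip c) = 1.
Proof.
have trig : is_trig_mx (first_col_unip c).
  apply/is_trig_mxP => i j lt_ij; rewrite mxE.
  case: eqP => [eq_ij | _]; first by rewrite eq_ij ltnn in lt_ij.
  by case: eqP => // j0; rewrite j0 ltn0 in lt_ij.
by rewrite det_trig // big1 // => i _; rewrite mxE eqxx.
Qed.

Lemma map_first_col_unip (R S : pzRingType) (f : R -> S) (c : 'I_p.+1 -> R) :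
  f 0 = 0 -> f 1 = 1 -> map_mx f (first_col_unip c) = first_col_unip (f \o c).
Proof.
by move=> f0 f1; apply/matrixP => i j; rewrite !mxE; case: eqP => // _; case: eqP.
Qed.

Lemma first_col_unip_conj_diag (R : comUnitRingType) (d : 'rV[R]_p.+1)
    (c c' : 'I_p.+1 -> R) :
  diag_mx d \in unitmx -> (forall i, c i * d 0 ord0 = d 0 i * c' i) ->
  invmx (diag_mx d) *m first_col_unip c *m diag_mx d = first_col_unip c'.
Proof.
move=> d_unit cc'; rewrite -mulmxA.
suff -> : first_col_unip c *m diag_mx d = diag_mx d *m first_col_unip c'.
  by rewrite mulKmx.
apply/matrixP => i j; rewrite mul_mx_diag mul_diag_mx !mxE.
case: eqP => [<- | _]; first by rewrite mulr1 mul1r.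
by case: eqP => [-> | _]; rewrite ?cc' ?mul0r ?mulr0.
Qed.

End FirstColumnUnipotent.

Lemma unitmx_diag (F : fieldType) p (d : 'rV[F]_p) :
  (forall i, d 0 i != 0) -> diag_mx d \in unitmx.
Proof.
move=> d_nz; rewrite unitmxE det_trig ?diag_mx_is_trig // unitfE.
by apply/prodf_neq0 => i _; rewrite mxE eqxx mulr1n.
Qed.

Lemma std_unip_last_block (k : fieldType) p (A : 'M[k]_p.+1) :
  std_unip [set ord_max] A ->
  forall i j, A i j = if i == j then 1 else if j == ord_max then A i ord_max else 0.
Proof.
move=> A_unip i j; case: (A_unip i j) => on_diag lower upper.
case: eqP => [/on_diag // | /eqP ne_ij].
case: eqP => [-> // | /eqP j_max].
case: (ltngtP i j) => [lt_ij | /lower // | eq_ij]; last first.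
  by rewrite (val_inj eq_ij) eqxx in ne_ij.
apply: upper => //; apply/existsP => -[s /andP[/set1P -> /andP[_ le_max_j]]].
by move: j_max; rewrite -val_eqE /= eqn_leq le_max_j -ltnS ltn_ord.
Qed.

Section ReversalConjugation.
Variables (k : finFieldType) (n : nat).

Definition rev_perm : {perm 'I_n.-1.+1} := perm (@rev_ord_inj n.-1.+1).

Definition GL_rev : {'GL_n[k]} := FinRing.Unit (unitmx_perm k rev_perm).

Lemma GL_rev_conjE (u : {'GL_n[k]}) i j :
  GLval (GL_rev^-1 * u * GL_rev)%g i j = GLval u (rev_ord i) (rev_ord j).
Proof.
have rev_inv : (rev_perm^-1)%g = rev_perm.
  by apply/permP => i'; apply: (@perm_inj _ rev_perm); rewrite permKV !permE rev_ordK.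
have inv_P : invmx (perm_mx rev_perm) = perm_mx rev_perm :> 'M[k]_n.-1.+1.
  rewrite -[LHS]mulmx1 -(perm_mx1 k n.-1.+1) -(mulVg rev_perm) perm_mxM rev_inv.
  by rewrite mulmxA mulVmx ?unitmx_perm // mul1mx.
rewrite !GL_MxE GL_VxE /= inv_P -{2}rev_inv -row_permE -col_permE !mxE.
by rewrite !permE.
Qed.

Lemma rev_conj_last_block (u : {'GL_n[k]}) :
  std_unip [set ord_max] (GLval (GL_rev^-1 * u * GL_rev)%g) ->
  GLval u = first_col_unip (fun i => GLval u i ord0).
Proof.
move=> /std_unip_last_block unip; apply/matrixP => i j.
have rev_max0 : rev_ord ord_max = ord0 :> 'I_n.-1.+1 by apply: val_inj; rewrite /= subnn.
have rev_max (l : 'I_n.-1.+1) : (rev_ord l == ord_max) = (l == ord0).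
  by rewrite -[ord_max]rev_ordK (inj_eq rev_ord_inj) rev_max0.
have := GL_rev_conjE u (rev_ord i) (rev_ord j); rewrite !rev_ordK => <-.
by rewrite unip [RHS]mxE (inj_eq rev_ord_inj) rev_max GL_rev_conjE rev_ordK rev_max0.
Qed.

End ReversalConjugation.

Section Valuation.
Variables (F : fieldType) (val : F -> int).
Hypothesis val_mul : forall x y : F, x != 0 -> y != 0 -> val (x * y) = val x + val y.

Lemma val1 : val 1 = 0.
Proof.
have := val_mul (oner_neq0 F) (oner_neq0 F); rewrite mulr1 => val11.
by apply: (@addrI _ (val 1)); rewrite addr0 -val11.
Qed.

Lemma intg1 : intg val 1.
Proof. by rewrite /intg /in_pow val1 lexx orbT. Qed.

Variable w : F.
Hypotheses (w_nz : w != 0) (val_w : val w = 1).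

Lemma val_expr e : val (w ^+ e) = e%:Z.
Proof.
elim: e => [|e IHe]; first by rewrite expr0 val1.
by rewrite exprS val_mul ?expf_neq0 // IHe val_w -addn1 PoszD addrC.
Qed.

Lemma in_pow_expr_mul (N : int) e c :
  intg val c -> N <= e%:Z -> in_pow val N (w ^+ e * c).
Proof.
rewrite /intg /in_pow; have [-> | c_nz] := eqVneq c 0; first by rewrite mulr0 eqxx.
rewrite /= => c_ge0 le_N_e; rewrite mulf_eq0 expf_eq0 (negbTE w_nz) (negbTE c_nz) andbF /=.
by rewrite val_mul ?expf_neq0 // val_expr (le_trans le_N_e) // lerDl.
Qed.

Lemma inK_first_col_unip n (c : 'I_n.-1.+1 -> F) :
  (forall i, intg val (c i)) -> inK val (first_col_unip c).
Proof.
move=> c_intg; rewrite /inK det_first_col_unip val1 oner_neq0; split=> // i j.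
rewrite mxE; case: eqP => _; first exact: intg1.
by case: eqP => _; rewrite ?c_intg // /intg /in_pow eqxx.
Qed.

Lemma inKm_first_col_unip n (m : nat) (c : 'I_n.-1.+1 -> F) :
  (forall i, intg val (c i)) -> in_pow val m%:Z (c ord_max) ->
  inKm val m (first_col_unip c).
Proof.
move=> c_intg c_max; split; first exact: inK_first_col_unip.
- move=> j /negbTE j_max; rewrite mxE eq_sym j_max.
  by case: eqP => // _; rewrite /in_pow eqxx.
- by rewrite mxE eqxx subrr /in_pow eqxx.
Qed.

End Valuation.

Lemma residue_section (F : fieldType) (val : F -> int) (k : finFieldType)
    (red : F -> k) :
  residue_map val red ->
  exists lift : k -> F, forall a, intg val (lift a) /\ red (lift a) = a.
Proof.
case=> _ _ _ red_onto _.
suff /fin_all_exists : forall a, exists x, intg val x /\ red x = a by [].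
by move=> a; have [x x_intg red_x] := red_onto a; exists x.
Qed.

Lemma residue_map0 (F : fieldType) (val : F -> int) (k : finFieldType)
    (red : F -> k) :
  residue_map val red -> red 0 = 0.
Proof.
case=> _ redD _ _ _; have intg0 : intg val 0 by rewrite /intg /in_pow eqxx.
by apply: (@addrI _ (red 0)); rewrite -redD // !addr0.
Qed.

Section ConjugationByG.
Variables (F : fieldType) (n : nat) (w : F) (alpha : nat -> nat).

Definition gexp (i : 'I_n.-1.+1) : nat :=
  if (i < n.-1)%N then alpha (n.-1 - i)%N else 0%N.

Lemma gexp_max : gexp ord_max = 0%N.
Proof. by rewrite /gexp ltnn. Qed.

Hypothesis alpha_mono : forall i j : nat, (1 <= i)%N -> (i <= j)%N -> (j <= n.-1)%N ->
  (alpha i <= alpha j)%N.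

Lemma gexp_ord0 : (0 < n.-1)%N -> gexp ord0 = alpha n.-1.
Proof. by move=> n1_gt0; rewrite /gexp /= n1_gt0 subn0. Qed.

Lemma gexp_le_ord0 i : (gexp i <= gexp ord0)%N.
Proof.
rewrite /gexp /=; case: ifP => // lt_i.
have n1_gt0 : (0 < n.-1)%N by apply: leq_ltn_trans lt_i.
by rewrite n1_gt0 subn0; apply: alpha_mono; rewrite ?subn_gt0 ?leq_subr.
Qed.

Lemma gmat_conj_first_col_unip (c : 'I_n.-1.+1 -> F) : w != 0 ->
  invmx (gmat n w alpha) *m first_col_unip c *m gmat n w alpha =
  first_col_unip (fun i => w ^+ (gexp ord0 - gexp i) * c i).
Proof.
move=> w_nz; apply: first_col_unip_conj_diag => [|i].
  by apply: unitmx_diag => i; rewrite mxE expf_neq0.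
by rewrite !mxE mulrA -exprD subnKC ?gexp_le_ord0 // mulrC.
Qed.

End ConjugationByG.

Theorem proposition4p7 (F : fieldType) (val : F -> int) (k : finFieldType)
  (red : F -> k) (R : closedFieldType) (n m : nat) (w : F) (alpha : nat -> nat)
  (d : nat) (tau : mx_representation R [set: {'GL_n[k]}]%G d) :
  nonarch_local_field val red ->
  (forall p : nat, p \in [pchar k] -> p \notin [pchar R]) ->
  (2 <= n)%N -> (1 <= m)%N ->
  w != 0 -> val w = 1 ->
  (forall i j : nat, (1 <= i)%N -> (i <= j)%N -> (j <= n.-1)%N ->
     (alpha i <= alpha j)%N) ->
  (m <= alpha n.-1)%N ->
  cuspidal tau ->
  no_fixed_vectors tau
    (fun h : {'GL_n[k]} =>
       exists x : 'M[F]_n.-1.+1,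
         [/\ inK val x,
             inKm val m (invmx (gmat n w alpha) *m x *m gmat n w alpha)
           & map_mx red x = GLval h]).
Proof.
move=> [[val_mul _ _] _ red_res] _ n_gt1 _ w_nz val_w alpha_mono m_le [_ cusp].
have n1_gt0 : (0 < n.-1)%N by rewrite -ltnS prednK // ltnW.
have [lift lift_spec] := residue_section red_res.
have [red1 _ _ _ _] := red_res.
move=> v v_fixed; apply: (cusp [set ord_max] _ _ (GL_rev k n) v).
- by apply/set0Pn; exists ord_max; rewrite in_set1.
- by rewrite in_set1 -val_eqE /= eq_sym -lt0n.
move=> u /rev_conj_last_block uE; apply: v_fixed.
pose c i := lift (GLval u i ord0).
have c_intg i : intg val (c i) by case: (lift_spec (GLval u i ord0)).
exists (first_col_unip c); split.
- exact: (inK_first_col_unip val_mul).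
- have in_pow_w := in_pow_expr_mul val_mul w_nz val_w.
  rewrite gmat_conj_first_col_unip //; apply: (inKm_first_col_unip val_mul).
    by move=> i; apply: in_pow_w.
  by apply: in_pow_w; rewrite // gexp_max subn0 gexp_ord0 // lez_nat.
- rewrite map_first_col_unip ?(residue_map0 red_res) // [RHS]uE.
  by apply/matrixP => i j; rewrite !mxE /=; case: (lift_spec (GLval u i ord0)) => _ ->.
Qed.
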